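(* For $0<\nu\le1$, the functions $p_*(\nu)$, $\nu h_*(\nu)$ and $\nu h(\mathrm e^{-1}\nu,\nu)$ are strictly increasing in $\nu$, while $h_*(\nu)$ and $h(\mathrm e^{-1}\nu,\nu)$ are strictly decreasing in $\nu$. Moreover, $$\nu h_*(\nu)\le\nu h(\mathrm e^{-1}\nu,\nu)\le(1-\nu+\mathrm e^{-1}\nu^2)^{-1}\le1+(\mathrm e-1)\nu\le\mathrm e.$$
   Context: For $0<\nu\le1$ and $0\le p<1$, let $\beta_p=1-\nu+p\nu$ and, for $p>0$, $h(p,\nu)=[\min\{\beta_p\ln\beta_p^{-1},\,p\ln p^{-1}\}]^{-1}$. Let $p_*(\nu)=\min\{p>0:\beta_p\ge\mathrm e^{-1}\text{ and }p\ln p=\beta_p\ln\beta_p\}$, which is the minimizer of $h(\cdot,\nu)$ over $0<p<1$, and $h_*(\nu)=h(p_*(\nu),\nu)=\min_{0<p<1}h(p,\nu)$. Here $\mathrm e$ is the base of the natural logarithm. *)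

From Stdlib Require Import Reals ClassicalEpsilon.
Open Scope R_scope.

Definition beta (p nu : R) : R := 1 - nu + p * nu.

Definition h (p nu : R) : R :=
  / Rmin (beta p nu * ln (/ beta p nu)) (p * ln (/ p)).

Definition pstar_set (nu p : R) : Prop :=
  0 < p /\ beta p nu >= exp (-1) /\ p * ln p = beta p nu * ln (beta p nu).

Definition is_pstar (nu p : R) : Prop :=
  pstar_set nu p /\ (forall q, pstar_set nu q -> p <= q).

(* p_*(nu) := min{p > 0 : beta_p >= e^{-1} and p ln p = beta_p ln beta_p}
   (chosen by Hilbert epsilon; it is the minimum whenever the minimum exists). *)
Definition pstar (nu : R) : R := epsilon (inhabits 0) (is_pstar nu).

Definition hstar (nu : R) : R := h (pstar nu) nu.

From Stdlib Require Import Reals Lra Psatz ClassicalEpsilon.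
From Coquelicot Require Import Coquelicot.
Open Scope R_scope.

(* The entropy function F(x) = -x ln x increases on (0, 1/e] and decreases on [1/e, 1),
   and h(p, nu) = 1 / min (F(beta_p), F(p)) for 0 < p < 1.  The minimiser p_*
   is the crossing point F(p) = F(beta_p) in (0, 1/e], so h_* is 1 / F at p_*; as nu
   grows beta_p decreases and the crossing moves right.  Since 1 - beta_p = nu (1 - p)
   and F(y) / (1 - y) is increasing, nu / F(beta_p) increases with nu.  The chain of
   bounds reduces to 1 - nu + nu^2/e <= exp (-nu) and 1 - nu + nu^2/e <= (1 - ln nu)/e. *)

Lemma exp_INR_mult n x : exp (INR n * x) = exp x ^ n.
Proof.
induction n as [|n IH]; simpl.
- rewrite Rmult_0_l; apply exp_0.
- rewrite <- IH, <- exp_plus; f_equal.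
  destruct n; simpl; ring.
Qed.

Lemma exp_1_mult_exp_m1 : exp 1 * exp (-1) = 1.
Proof. rewrite <- exp_plus, Rplus_opp_r; apply exp_0. Qed.

Lemma exp_bounds :
  269/100 < exp 1 < 274/100 /\ 100/274 < exp (-1) < 100/269.
Proof.
assert (h64 : forall x, exp x = exp (x / 64) ^ 64).
{ intros x; rewrite <- exp_INR_mult; f_equal; simpl; field. }
assert (lo1 : 269/100 < exp 1).
{ assert (1 + 1/64 < exp (1/64)) by (apply exp_ineq1; lra).
  assert ((1 + 1/64) ^ 64 <= exp (1/64) ^ 64) by (apply pow_incr; lra).
  assert (269/100 < (1 + 1/64) ^ 64) by (simpl; lra).
  rewrite h64; lra. }
assert (lom1 : 100/274 < exp (-1)).
{ assert (1 + (-1/64) < exp (-1/64)) by (apply exp_ineq1; lra).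
  assert ((1 + (-1/64)) ^ 64 <= exp (-1/64) ^ 64) by (apply pow_incr; lra).
  assert (100/274 < (1 + (-1/64)) ^ 64) by (simpl; lra).
  rewrite h64; lra. }
pose proof exp_1_mult_exp_m1.
pose proof (exp_pos 1); pose proof (exp_pos (-1)).
split; split; nra.
Qed.

Lemma lt_of_is_derive_pos (G G' : R -> R) a b : a < b ->
  (forall c, a <= c <= b -> is_derive G c (G' c)) ->
  (forall c, a < c < b -> 0 < G' c) -> G a < G b.
Proof.
intros hab hd hpos.
destruct (MVT_cor2 G G' a b hab) as [c [hc1 hc2]].
{ intros c hc; apply is_derive_Reals; auto. }
assert (0 < G' c * (b - a)) by (apply Rmult_lt_0_compat; [apply hpos|]; lra).
lra.
Qed.

Lemma Rmult_inv_lt_cross n1 n2 M1 M2 : 0 < M1 -> 0 < M2 ->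
  n1 * M2 < n2 * M1 -> n1 * / M1 < n2 * / M2.
Proof.
intros h1 h2 h.
replace (n1 * / M1) with (n1 * M2 * / (M1 * M2)) by (field; lra).
replace (n2 * / M2) with (n2 * M1 * / (M1 * M2)) by (field; lra).
apply Rmult_lt_compat_r; [apply Rinv_0_lt_compat; nra | exact h].
Qed.

Lemma Rmult_inv_Rmin_lt n1 n2 A1 A2 B1 B2 :
  0 <= n1 -> 0 < A1 -> 0 < A2 -> 0 < B1 -> 0 < B2 ->
  n1 * A2 < n2 * A1 -> n1 * B2 < n2 * B1 ->
  n1 * / Rmin A1 B1 < n2 * / Rmin A2 B2.
Proof.
intros; apply Rmult_inv_lt_cross;
  unfold Rmin; repeat destruct Rle_dec; nra.
Qed.

Lemma Rinv_Rmin_lt A1 A2 B1 B2 : 0 < A1 -> 0 < B1 -> A1 < A2 -> B1 < B2 ->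
  / Rmin A2 B2 < / Rmin A1 B1.
Proof.
intros; apply Rinv_lt_contravar; unfold Rmin; repeat destruct Rle_dec; nra.
Qed.

Lemma Rmult_inv_le_inv n M b : 0 < M -> 0 < b -> n * b <= M -> n * / M <= / b.
Proof.
intros hM hb h.
replace (n * / M) with (n * b * / (M * b)) by (field; lra).
replace (/ b) with (M * / (M * b)) by (field; lra).
apply Rmult_le_compat_r; [left; apply Rinv_0_lt_compat; nra | exact h].
Qed.

Lemma ln_lt_sub_1 x : 0 < x -> x <> 1 -> ln x < x - 1.
Proof.
intros hx h1.
assert (hln : ln x <> 0) by (intros H; apply h1; rewrite <- (exp_ln x hx), H; apply exp_0).
pose proof (exp_ineq1 (ln x) hln) as E; rewrite exp_ln in E; lra.
Qed.

Definition entropy (x : R) : R := - (x * ln x).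

Lemma x_ln_inv x : 0 < x -> x * ln (/ x) = entropy x.
Proof. intros; rewrite ln_Rinv by lra; unfold entropy; ring. Qed.

Lemma entropy_pos x : 0 < x < 1 -> 0 < entropy x.
Proof.
intros hx; unfold entropy.
assert (ln x < 0) by (rewrite <- ln_1; apply ln_increasing; lra).
nra.
Qed.

Lemma entropy_exp_m1 : entropy (exp (-1)) = exp (-1).
Proof. unfold entropy; rewrite ln_exp; ring. Qed.

Lemma entropy_increasing x y : 0 < x -> x < y -> y <= exp (-1) ->
  entropy x < entropy y.
Proof.
intros hx hxy hy.
apply (lt_of_is_derive_pos entropy (fun c => - (ln c + 1))); [lra | |].
- intros c hc; unfold entropy; auto_derive; [lra | field; lra].
- intros c hc.
  assert (hln : ln c < ln (exp (-1))) by (apply ln_increasing; lra).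
  rewrite ln_exp in hln; lra.
Qed.

Lemma entropy_decreasing x y : exp (-1) <= x -> x < y -> entropy y < entropy x.
Proof.
intros hx hxy; pose proof (exp_pos (-1)).
enough (- entropy x < - entropy y) by lra.
apply (lt_of_is_derive_pos (fun c => - entropy c) (fun c => ln c + 1)); [lra | |].
- intros c hc; unfold entropy; auto_derive; [lra | field; lra].
- intros c hc.
  assert (hln : ln (exp (-1)) < ln c) by (apply ln_increasing; lra).
  rewrite ln_exp in hln; lra.
Qed.

Lemma entropy_le_increasing x y : 0 < x -> x <= y -> y <= exp (-1) ->
  entropy x <= entropy y.
Proof.
intros; destruct (Req_dec x y) as [->|]; [lra|].
left; apply entropy_increasing; lra.
Qed.

Lemma entropy_le_decreasing x y : exp (-1) <= x -> x <= y -> entropy y <= entropy x.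
Proof.
intros; destruct (Req_dec x y) as [->|]; [lra|].
left; apply entropy_decreasing; lra.
Qed.

Lemma entropy_le_exp_m1 x : 0 < x -> entropy x <= exp (-1).
Proof.
intros hx; rewrite <- entropy_exp_m1.
destruct (Rle_or_lt x (exp (-1))).
- apply entropy_le_increasing; lra.
- apply entropy_le_decreasing; lra.
Qed.

Lemma entropy_sqr c : 0 < c -> entropy (c * c) = 2 * c * entropy c.
Proof. intros; unfold entropy; rewrite ln_mult by lra; ring. Qed.

Lemma entropy_small m : 0 < m -> exists a, 0 < a < exp (-1) /\ entropy a < m.
Proof.
intros hm; pose proof exp_bounds.
set (c := Rmin m (1/2)).
assert (hc : 0 < c <= 1/2) by (unfold c, Rmin; destruct Rle_dec; lra).
assert (c <= m) by apply Rmin_l.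
exists (c * c); split; [nra|].
rewrite entropy_sqr by lra.
pose proof (entropy_le_exp_m1 c ltac:(lra)).
nra.
Qed.

Lemma entropy_div_one_sub_increasing y1 y2 : 0 < y1 -> y1 < y2 -> y2 < 1 ->
  entropy y1 * (1 - y2) < entropy y2 * (1 - y1).
Proof.
intros h1 h12 h2.
assert (Q : entropy y1 / (1 - y1) < entropy y2 / (1 - y2)).
{ apply (lt_of_is_derive_pos (fun y => entropy y / (1 - y))
           (fun y => (y - 1 - ln y) / (1 - y) ^ 2)); [lra | |].
  - intros c hc; unfold entropy; auto_derive; [lra | field; lra].
  - intros c hc.
    pose proof (ln_lt_sub_1 c ltac:(lra) ltac:(lra)).
    apply Rdiv_lt_0_compat; [lra | apply pow_lt; lra]. }
apply (Rmult_lt_compat_r ((1 - y1) * (1 - y2))) in Q; [|nra].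
replace (entropy y1 / (1 - y1) * ((1 - y1) * (1 - y2)))
  with (entropy y1 * (1 - y2)) in Q by (field; lra).
replace (entropy y2 / (1 - y2) * ((1 - y1) * (1 - y2)))
  with (entropy y2 * (1 - y1)) in Q by (field; lra).
exact Q.
Qed.

Lemma scaled_entropy_lt n1 n2 d1 d2 y1 y2 :
  0 < y2 -> y2 < y1 -> y1 < 1 -> 0 < d2 <= d1 ->
  1 - y1 = n1 * d1 -> 1 - y2 = n2 * d2 ->
  n1 * entropy y2 < n2 * entropy y1.
Proof.
intros hy2 hy21 hy1 hd e1 e2.
pose proof (entropy_div_one_sub_increasing y2 y1 hy2 hy21 hy1) as Q.
rewrite e1, e2 in Q.
pose proof (entropy_pos y1 ltac:(lra)).
assert (0 <= n2) by nra.
assert (entropy y1 * n2 * d2 <= entropy y1 * n2 * d1)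
  by (apply Rmult_le_compat_l; [apply Rmult_le_pos|]; lra).
apply (Rmult_lt_reg_r d1); lra.
Qed.

Lemma beta_bounds p nu : 0 < p < 1 -> 0 < nu <= 1 -> p <= beta p nu < 1.
Proof. intros; unfold beta; split; nra. Qed.

Lemma h_entropy p nu : 0 < p < 1 -> 0 < nu <= 1 ->
  h p nu = / Rmin (entropy (beta p nu)) (entropy p).
Proof.
intros hp hnu; pose proof (beta_bounds p nu hp hnu).
unfold h; rewrite !x_ln_inv by lra; reflexivity.
Qed.

Lemma is_pstar_of_crossing nu r : 0 < nu -> 0 < r <= exp (-1) -> pstar_set nu r ->
  is_pstar nu r.
Proof.
intros hnu hr hs; split; [exact hs|].
intros q [hq [hbq heq]].
destruct (Rle_or_lt r q) as [|hqr]; [assumption|].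
exfalso; destruct hs as [_ [hbr heqr]].
assert (entropy q < entropy r) by (apply entropy_increasing; lra).
assert (entropy (beta r nu) < entropy (beta q nu))
  by (apply entropy_decreasing; unfold beta in *; nra).
unfold entropy in *; lra.
Qed.

(* If nu <= 1 - 1/e then beta_p >= 1/e for all p, so F(beta_p) stays above a positive
   constant while F(p) -> 0; otherwise take the p with beta_p = 1/e. *)
Lemma crossing_lower_end nu : 0 < nu < 1 ->
  exists a, 0 < a < exp (-1) /\ exp (-1) <= beta a nu /\
    entropy a < entropy (beta a nu).
Proof.
intros hnu; pose proof exp_bounds.
destruct (Rle_or_lt nu (1 - exp (-1))) as [hsmall|hlarge].
- assert (hm : 0 < entropy (beta (exp (-1)) nu))
    by (apply entropy_pos; unfold beta; nra).
  destruct (entropy_small _ hm) as [a [ha hFa]].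
  exists a.
  assert (entropy (beta (exp (-1)) nu) <= entropy (beta a nu))
    by (apply entropy_le_decreasing; unfold beta; nra).
  repeat split; unfold beta in *; nra.
- set (a := 1 - (1 - exp (-1)) / nu).
  assert (hb : beta a nu = exp (-1)) by (unfold a, beta; field; lra).
  assert (ha : 0 < a < exp (-1)).
  { assert ((1 - exp (-1)) / nu * nu = 1 - exp (-1)) by (field; lra).
    unfold a; split; nra. }
  exists a; rewrite hb.
  repeat split; try lra.
  apply entropy_increasing; lra.
Qed.

Lemma crossing_exists nu : 0 < nu <= 1 ->
  exists r, 0 < r <= exp (-1) /\ pstar_set nu r.
Proof.
intros hnu; pose proof exp_bounds.
destruct (Req_dec nu 1) as [->|hne].
{ exists (exp (-1)); unfold pstar_set, beta.
  replace (1 - 1 + exp (-1) * 1) with (exp (-1)) by ring.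
  repeat split; lra. }
destruct (crossing_lower_end nu) as [a [ha [hba hFa]]]; [lra|].
set (G := fun p => entropy p - entropy (beta p nu)).
assert (hGe : 0 < G (exp (-1))).
{ assert (entropy (beta (exp (-1)) nu) < entropy (exp (-1)))
    by (apply entropy_decreasing; unfold beta; nra).
  unfold G; lra. }
destruct (Ranalysis5.IVT_interv G a (exp (-1))) as [r [hr hGr]];
  [| lra | unfold G; lra | exact hGe |].
- intros x hx; apply derivable_continuous_pt, ex_derive_Reals_0.
  unfold G, entropy, beta; auto_derive; nra.
- exists r; unfold pstar_set, G, entropy in *.
  repeat split; unfold beta in *; nra.
Qed.

Lemma pstar_spec nu : 0 < nu <= 1 ->
  0 < pstar nu <= exp (-1) /\ exp (-1) <= beta (pstar nu) nu /\
  entropy (pstar nu) = entropy (beta (pstar nu) nu).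
Proof.
intros hnu; destruct (crossing_exists nu hnu) as [r [hr hs]].
assert (H : is_pstar nu (pstar nu)).
{ unfold pstar; apply epsilon_spec; exists r; apply is_pstar_of_crossing; tauto. }
destruct H as [[hp [hb heq]] hmin].
specialize (hmin r hs).
unfold entropy; repeat split; lra.
Qed.

Lemma hstar_entropy nu : 0 < nu <= 1 -> hstar nu = / entropy (pstar nu).
Proof.
intros hnu; destruct (pstar_spec nu hnu) as [hp [hb heq]].
pose proof exp_bounds.
unfold hstar; rewrite h_entropy, <- heq by lra.
rewrite Rmin_left by lra; reflexivity.
Qed.

Lemma hstar_le_h nu q : 0 < nu <= 1 -> 0 < q < 1 -> hstar nu <= h q nu.
Proof.
intros hnu hq; destruct (pstar_spec nu hnu) as [hp [hb heq]].
pose proof exp_bounds; pose proof (beta_bounds q nu hq hnu).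
rewrite hstar_entropy, h_entropy by lra.
apply Rinv_le_contravar.
{ apply Rmin_pos; apply entropy_pos; lra. }
destruct (Rle_or_lt q (pstar nu)).
- assert (entropy q <= entropy (pstar nu)) by (apply entropy_le_increasing; lra).
  pose proof (Rmin_r (entropy (beta q nu)) (entropy q)); lra.
- assert (entropy (beta q nu) <= entropy (beta (pstar nu) nu))
    by (apply entropy_le_decreasing; unfold beta in *; nra).
  pose proof (Rmin_l (entropy (beta q nu)) (entropy q)); lra.
Qed.

Lemma pstar_increasing n1 n2 : 0 < n1 -> n1 < n2 -> n2 <= 1 -> pstar n1 < pstar n2.
Proof.
intros h1 h12 h2; pose proof exp_bounds.
destruct (pstar_spec n1 ltac:(lra)) as [hp1 [hb1 heq1]].
destruct (pstar_spec n2 ltac:(lra)) as [hp2 [hb2 heq2]].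
destruct (Rlt_or_le (pstar n1) (pstar n2)) as [|hle]; [assumption|].
exfalso.
assert (entropy (pstar n2) <= entropy (pstar n1)) by (apply entropy_le_increasing; lra).
assert (entropy (beta (pstar n1) n1) < entropy (beta (pstar n2) n2))
  by (apply entropy_decreasing; unfold beta in *; nra).
lra.
Qed.

Lemma nu_h_increasing p n1 n2 : 0 < p < 1 -> 0 < n1 -> n1 < n2 -> n2 <= 1 ->
  n1 * h p n1 < n2 * h p n2.
Proof.
intros hp h1 h12 h2.
pose proof (beta_bounds p n1 hp ltac:(lra)); pose proof (beta_bounds p n2 hp ltac:(lra)).
pose proof (entropy_pos p hp).
rewrite !h_entropy by lra.
apply Rmult_inv_Rmin_lt; try lra; try (apply entropy_pos; lra).
- apply (scaled_entropy_lt n1 n2 (1 - p) (1 - p)); unfold beta in *; nra.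
- nra.
Qed.

Lemma nu_hstar_increasing n1 n2 : 0 < n1 -> n1 < n2 -> n2 <= 1 ->
  n1 * hstar n1 < n2 * hstar n2.
Proof.
intros h1 h12 h2; pose proof exp_bounds.
destruct (pstar_spec n2 ltac:(lra)) as [hp2 _].
apply Rle_lt_trans with (n1 * h (pstar n2) n1).
- apply Rmult_le_compat_l; [lra | apply hstar_le_h; lra].
- apply nu_h_increasing; lra.
Qed.

Lemma hstar_decreasing n1 n2 : 0 < n1 -> n1 < n2 -> n2 <= 1 -> hstar n2 < hstar n1.
Proof.
intros h1 h12 h2; pose proof exp_bounds.
destruct (pstar_spec n1 ltac:(lra)) as [hp1 _].
destruct (pstar_spec n2 ltac:(lra)) as [hp2 _].
pose proof (pstar_increasing n1 n2 h1 h12 h2).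
rewrite !hstar_entropy by lra.
apply Rinv_lt_contravar.
- apply Rmult_lt_0_compat; apply entropy_pos; lra.
- apply entropy_increasing; lra.
Qed.

Lemma beta_diag nu : beta (exp (-1) * nu) nu = 1 - nu + exp (-1) * nu ^ 2.
Proof. unfold beta; ring. Qed.

Lemma beta_diag_bounds nu : 0 < nu <= 1 ->
  exp (-1) <= 1 - nu + exp (-1) * nu ^ 2 < 1.
Proof.
intros hnu; pose proof exp_bounds.
assert (0 <= (1 - nu) * (1 - exp (-1) - exp (-1) * nu)) by (apply Rmult_le_pos; nra).
split; nra.
Qed.

Lemma beta_diag_decreasing n1 n2 : 0 < n1 -> n1 < n2 -> n2 <= 1 ->
  1 - n2 + exp (-1) * n2 ^ 2 < 1 - n1 + exp (-1) * n1 ^ 2.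
Proof.
intros; pose proof exp_bounds.
assert (exp (-1) * (n1 + n2) < 1) by nra.
assert (0 < (n2 - n1) * (1 - exp (-1) * (n1 + n2))) by (apply Rmult_lt_0_compat; lra).
nra.
Qed.

Lemma entropy_diag nu : 0 < nu ->
  entropy (exp (-1) * nu) = exp (-1) * nu * (1 - ln nu).
Proof.
intros; unfold entropy; rewrite ln_mult, ln_exp by (try apply exp_pos; lra); ring.
Qed.

Lemma h_diag_entropy nu : 0 < nu <= 1 ->
  h (exp (-1) * nu) nu =
  / Rmin (entropy (1 - nu + exp (-1) * nu ^ 2)) (exp (-1) * nu * (1 - ln nu)).
Proof.
intros hnu; pose proof exp_bounds.
rewrite h_entropy, beta_diag, entropy_diag by nra; reflexivity.
Qed.

Lemma nu_h_diag_increasing n1 n2 : 0 < n1 -> n1 < n2 -> n2 <= 1 ->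
  n1 * h (exp (-1) * n1) n1 < n2 * h (exp (-1) * n2) n2.
Proof.
intros h1 h12 h2; pose proof exp_bounds.
pose proof (beta_diag_bounds n1 ltac:(lra)); pose proof (beta_diag_bounds n2 ltac:(lra)).
assert (hl : ln n1 < ln n2) by (apply ln_increasing; lra).
assert (hl2 : ln n2 <= 0) by (rewrite <- ln_1; apply ln_le; lra).
assert (hn : 0 < exp (-1) * n1 * n2) by (apply Rmult_lt_0_compat; nra).
rewrite !h_diag_entropy by lra.
apply Rmult_inv_Rmin_lt;
  [lra | apply entropy_pos; lra | apply entropy_pos; lra
  | apply Rmult_lt_0_compat; nra | apply Rmult_lt_0_compat; nra | | nra].
apply (scaled_entropy_lt n1 n2 (1 - exp (-1) * n1) (1 - exp (-1) * n2));
  [lra | apply beta_diag_decreasing; lra | lra | nra | ring | ring].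
Qed.

Lemma h_diag_decreasing n1 n2 : 0 < n1 -> n1 < n2 -> n2 <= 1 ->
  h (exp (-1) * n2) n2 < h (exp (-1) * n1) n1.
Proof.
intros h1 h12 h2; pose proof exp_bounds.
pose proof (beta_diag_bounds n1 ltac:(lra)); pose proof (beta_diag_bounds n2 ltac:(lra)).
assert (entropy (exp (-1) * n1) < entropy (exp (-1) * n2))
  by (apply entropy_increasing; nra).
assert (entropy (1 - n1 + exp (-1) * n1 ^ 2) < entropy (1 - n2 + exp (-1) * n2 ^ 2))
  by (apply entropy_decreasing; [lra | apply beta_diag_decreasing; lra]).
rewrite !h_entropy, !beta_diag by nra.
apply Rinv_Rmin_lt; try assumption; apply entropy_pos; nra.
Qed.

Lemma exp_ge_taylor2 s : 0 <= s -> 1 + s + s ^ 2 / 2 <= exp s.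
Proof.
intros hs; pose proof (exp_ge_taylor s 2 hs) as T; simpl in T.
replace (1 + s + s ^ 2 / 2) with (1 / 1 + s * 1 / 1 + s * (s * 1) / 2) by field.
exact T.
Qed.

Lemma exp_neg_lt_taylor2 s : 0 < s -> exp (- s) < 1 - s + s ^ 2 / 2.
Proof.
intros hs.
enough (hG : 1 - 0 + 0 ^ 2 / 2 - exp (- 0) < 1 - s + s ^ 2 / 2 - exp (- s))
  by (rewrite Ropp_0, exp_0 in hG; lra).
apply (lt_of_is_derive_pos (fun s => 1 - s + s ^ 2 / 2 - exp (- s))
         (fun c => -1 + c + exp (- c))); [lra | |].
- intros c hc; auto_derive; auto; field.
- intros c hc; pose proof (exp_ineq1 (- c) ltac:(lra)); lra.
Qed.

Lemma exp_neg_gt_taylor3 s : 0 < s -> 1 - s + s ^ 2 / 2 - s ^ 3 / 6 < exp (- s).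
Proof.
intros hs.
enough (hG : exp (- 0) - (1 - 0 + 0 ^ 2 / 2 - 0 ^ 3 / 6) <
             exp (- s) - (1 - s + s ^ 2 / 2 - s ^ 3 / 6))
  by (rewrite Ropp_0, exp_0 in hG; lra).
apply (lt_of_is_derive_pos (fun s => exp (- s) - (1 - s + s ^ 2 / 2 - s ^ 3 / 6))
         (fun c => 1 - c + c ^ 2 / 2 - exp (- c))); [lra | |].
- intros c hc; auto_derive; auto; field.
- intros c hc; pose proof (exp_neg_lt_taylor2 c ltac:(lra)); lra.
Qed.

(* On (0, 1/2] expand exp (-nu) at 0; on (1/2, 1] write exp (-nu) = exp (1 - nu) / e
   and expand at 1.  Both estimates need the numerical bounds on e. *)
Lemma beta_diag_le_exp_neg nu : 0 < nu <= 1 ->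
  1 - nu + exp (-1) * nu ^ 2 <= exp (- nu).
Proof.
intros hnu; pose proof exp_bounds.
destruct (Rle_or_lt nu (1/2)).
- pose proof (exp_neg_gt_taylor3 nu ltac:(lra)).
  assert (nu ^ 2 * (1/2 - nu / 6 - exp (-1)) >= 0) by (apply Rle_ge, Rmult_le_pos; nra).
  nra.
- set (s := 1 - nu).
  replace (- nu) with (-1 + s) by (unfold s; ring); rewrite exp_plus.
  pose proof (exp_ge_taylor2 s ltac:(unfold s; lra)).
  assert (s * (exp (-1) * (3 - s / 2) - 1) >= 0)
    by (apply Rle_ge, Rmult_le_pos; unfold s in *; nra).
  replace nu with (1 - s) by (unfold s; ring).
  assert (exp (-1) * (1 + s + s ^ 2 / 2) <= exp (-1) * exp s)
    by (apply Rmult_le_compat_l; lra).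
  nra.
Qed.

Lemma beta_diag_le_ln_bound nu : 0 < nu <= 1 ->
  1 - nu + exp (-1) * nu ^ 2 <= exp (-1) * (1 - ln nu).
Proof.
intros hnu; pose proof exp_bounds.
destruct (Req_dec nu 1) as [->|hne]; [rewrite ln_1; lra|].
set (G := fun x => 1 - x + exp (-1) * x ^ 2 - exp (-1) * (1 - ln x)).
enough (G nu < G 1) by (unfold G in *; rewrite ln_1 in *; lra).
apply (lt_of_is_derive_pos G (fun x => -1 + 2 * exp (-1) * x + exp (-1) / x)); [lra | |].
- intros c hc; unfold G; auto_derive; [lra | field; lra].
- intros c hc.
  (* the discriminant 1 - 8 / e^2 of 2 x^2 / e - x + 1 / e is negative *)
  assert (1 < 8 * exp (-1) ^ 2) by nra.
  pose proof (pow2_ge_0 (4 * exp (-1) * c - 1)).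
  assert (0 < 8 * exp (-1) * (2 * exp (-1) * c ^ 2 - c + exp (-1))) by nra.
  assert (0 < 2 * exp (-1) * c ^ 2 - c + exp (-1)).
  { apply (Rmult_lt_reg_l (8 * exp (-1))); lra. }
  replace (-1 + 2 * exp (-1) * c + exp (-1) / c)
    with ((2 * exp (-1) * c ^ 2 - c + exp (-1)) / c) by (field; lra).
  apply Rdiv_lt_0_compat; lra.
Qed.

Lemma nu_h_diag_le_inv_beta nu : 0 < nu <= 1 ->
  nu * h (exp (-1) * nu) nu <= / (1 - nu + exp (-1) * nu ^ 2).
Proof.
intros hnu; pose proof exp_bounds.
pose proof (beta_diag_bounds nu hnu) as hb.
pose proof (beta_diag_le_ln_bound nu hnu) as hbln.
set (b := 1 - nu + exp (-1) * nu ^ 2) in *.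
assert (hln : ln nu <= 0) by (rewrite <- ln_1; apply ln_le; lra).
assert (hlnb : ln b <= - nu).
{ rewrite <- (ln_exp (- nu)); apply ln_le; [lra | apply beta_diag_le_exp_neg; lra]. }
rewrite h_diag_entropy by lra; fold b.
apply Rmult_inv_le_inv; [| lra |].
- apply Rmin_pos; [apply entropy_pos; lra |].
  apply Rmult_lt_0_compat; [apply Rmult_lt_0_compat|]; lra.
- apply Rmin_glb; unfold entropy.
  + enough (b * nu <= b * - ln b) by lra.
    apply Rmult_le_compat_l; lra.
  + replace (exp (-1) * nu * (1 - ln nu)) with (nu * (exp (-1) * (1 - ln nu))) by ring.
    apply Rmult_le_compat_l; lra.
Qed.

Lemma inv_beta_diag_le nu : 0 < nu <= 1 ->
  / (1 - nu + exp (-1) * nu ^ 2) <= 1 + (exp 1 - 1) * nu.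
Proof.
intros hnu; pose proof exp_bounds.
pose proof (beta_diag_bounds nu hnu) as hb.
set (b := 1 - nu + exp (-1) * nu ^ 2) in *.
assert (hid : b * (1 + (exp 1 - 1) * nu) - 1 =
  nu * (1 - nu) * (exp 1 - 2 - (1 - exp (-1)) * nu) + (exp 1 * exp (-1) - 1) * nu ^ 3)
  by (unfold b; ring).
rewrite exp_1_mult_exp_m1 in hid.
assert (0 <= nu * (1 - nu) * (exp 1 - 2 - (1 - exp (-1)) * nu))
  by (apply Rmult_le_pos; nra).
apply (Rmult_le_reg_l b); [lra|].
rewrite Rinv_r by lra; lra.
Qed.

Theorem lemma12 :
  (forall nu1 nu2 : R, 0 < nu1 -> nu1 < nu2 -> nu2 <= 1 ->
     pstar nu1 < pstar nu2 /\
     nu1 * hstar nu1 < nu2 * hstar nu2 /\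
     nu1 * h (exp (-1) * nu1) nu1 < nu2 * h (exp (-1) * nu2) nu2 /\
     hstar nu2 < hstar nu1 /\
     h (exp (-1) * nu2) nu2 < h (exp (-1) * nu1) nu1) /\
  (forall nu : R, 0 < nu -> nu <= 1 ->
     nu * hstar nu <= nu * h (exp (-1) * nu) nu /\
     nu * h (exp (-1) * nu) nu <= / (1 - nu + exp (-1) * nu ^ 2) /\
     / (1 - nu + exp (-1) * nu ^ 2) <= 1 + (exp 1 - 1) * nu /\
     1 + (exp 1 - 1) * nu <= exp 1).
Proof.
split.
- intros n1 n2 h1 h12 h2.
  repeat split.
  + apply pstar_increasing; assumption.
  + apply nu_hstar_increasing; assumption.
  + apply nu_h_diag_increasing; assumption.
  + apply hstar_decreasing; assumption.
  + apply h_diag_decreasing; assumption.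
- intros nu h0 h1; pose proof exp_bounds.
  repeat split.
  + apply Rmult_le_compat_l; [lra | apply hstar_le_h; nra].
  + apply nu_h_diag_le_inv_beta; lra.
  + apply inv_beta_diag_le; lra.
  + nra.
Qed.
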